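(* Let $W_{\tilde{\boldsymbol{\delta}}}\equiv\mathbb{E}[Y_T(\tilde{\boldsymbol{\delta}}(\cdot))]$ for $\tilde{\boldsymbol{\delta}}(\cdot)\in\mathcal{D}_{stoch}$ and $W_{\boldsymbol{\delta}}\equiv E[Y_T(\boldsymbol{\delta}(\cdot))]$ for $\boldsymbol{\delta}(\cdot)\in\mathcal{D}$. Then $$\boldsymbol{\delta}^*(\cdot)\equiv\arg\max_{\boldsymbol{\delta}(\cdot)\in\mathcal{D}}W_{\boldsymbol{\delta}}=\arg\max_{\tilde{\boldsymbol{\delta}}(\cdot)\in\mathcal{D}_{stoch}}W_{\tilde{\boldsymbol{\delta}}}.$$
   Context: Fix $T\ge1$; $\boldsymbol{w}^t=(w_1,\dots,w_t)$. Binary potential outcomes $Y_t(\boldsymbol{d}^t)\in\{0,1\}$ are defined for each treatment history $\boldsymbol{d}^t\in\{0,1\}^t$, $t=1,\dots,T$. A deterministic dynamic regime is $\boldsymbol{\delta}(\cdot)=(\delta_1,\delta_2(\cdot),\dots,\delta_T(\cdot))$ with $\delta_t:\{0,1\}^{t-1}\times\{0,1\}^{t-1}\to\{0,1\}$; $\mathcal{D}$ is the set of all such regimes. The counterfactual outcome is $Y_T(\boldsymbol{\delta}(\cdot))=Y_T(\boldsymbol{d})$ where $d_1=\delta_1$ and $d_t=\delta_t(\boldsymbol{Y}^{t-1}(\boldsymbol{d}^{t-1}),\boldsymbol{d}^{t-1})$ for $t\ge2$. A stochastic dynamic regime is $\tilde{\boldsymbol{\delta}}(\cdot)=(\tilde\delta_1,\dots,\tilde\delta_T(\cdot))$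 whose rules take values in $[0,1]$ (probability of treatment) given the past outcomes and treatments; $\mathcal{D}_{stoch}$ is the set of all such regimes, so $\mathcal{D}\subset\mathcal{D}_{stoch}$. $Y_T(\tilde{\boldsymbol{\delta}}(\cdot))$ is the counterfactual outcome $Y_T(\boldsymbol{\delta}(\cdot))$ where, for every $t\le T$, the deterministic rule value $\delta_t(\cdot)=1$ is randomly assigned with probability $\tilde\delta_t(\cdot)$ and $\delta_t(\cdot)=0$ otherwise; $\mathbb{E}$ denotes expectation over the counterfactual outcomes and this randomization. *)

From HB Require Import structures.
From mathcomp Require Import all_boot all_order all_algebra.
Set Implicit Arguments. Unset Strict Implicit. Unset Printing Implicit Defensive.
Import Order.TTheory GRing.Theory Num.Theory.
Local Open Scope ring_scope.

(* Periods are indexed by i : 'I_T, period i stands for t = i+1.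
   A history of length i (for period i+1) is an i.-tuple bool. *)

(* Deterministic dynamic regime: delta_{i+1} : {0,1}^i (past outcomes)
   x {0,1}^i (past treatments) -> {0,1}.  D is this finite type. *)
Definition regime (T : nat) :=
  {dffun forall i : 'I_T, {ffun i.-tuple bool * i.-tuple bool -> bool}}.

(* Stochastic dynamic regime: rules with values (probability of treatment). *)
Definition stoch_regime (R : realFieldType) (T : nat) :=
  forall i : 'I_T, i.-tuple bool * i.-tuple bool -> R.

Definition is_stoch (R : realFieldType) (T : nat) (sd : stoch_regime R T) :=
  forall i h, 0 <= sd i h <= 1.

Definition embed (R : realFieldType) (T : nat) (d : regime T) : stoch_regime R T :=
  fun i h => (d i h)%:R.

Definition tup (k : nat) (s : seq bool) : k.-tuple bool :=
  insubd (nseq_tuple k false) s.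

(* Potential outcomes: for each state w of the (finite) sample space,
   Y w i dh = Y_{i+1}(d^{i+1}) with dh : (i+1).-tuple bool. *)
Section Path.
Variables (T : nat) (Omega : finType)
  (Y : Omega -> forall i : 'I_T, i.+1.-tuple bool -> bool).

(* (treatments d^n, outcomes Y^n(d^n)) generated by regime d after n steps *)
Fixpoint path (w : Omega) (d : regime T) (n : nat) : seq bool * seq bool :=
  match n with
  | 0 => ([::], [::])
  | n'.+1 =>
    let: (ds, ys) := path w d n' in
    let dn := match (insub n' : option 'I_T) with
              | Some i => d i (@tup i ys, @tup i ds)
              | None => false end in
    let ds' := rcons ds dn in
    let yn := match (insub n' : option 'I_T) with
              | Some i => @Y w i (@tup (i.+1) ds')
              | None => false end in
    (ds', rcons ys yn)
  end.

Definition YT (w : Omega) (d : regime T) : bool := last false (path w d T).2.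

End Path.

(* W_delta = E[Y_T(delta(.))], with p the probability mass function of the
   joint distribution of potential outcomes. *)
Definition W (R : realFieldType) (T : nat) (Omega : finType) (p : Omega -> R)
  (Y : Omega -> forall i : 'I_T, i.+1.-tuple bool -> bool) (d : regime T) : R :=
  \sum_(w : Omega) p w * (YT Y w d)%:R.

(* probability that the independent randomization of every rule value
   delta_t(h) := 1 w.p. sd_t(h) produces the deterministic regime d *)
Definition rand_weight (R : realFieldType) (T : nat) (sd : stoch_regime R T)
  (d : regime T) : R :=
  \prod_(i : 'I_T) \prod_(h : i.-tuple bool * i.-tuple bool)
     (if d i h then sd i h else 1 - sd i h).

(* W_{sd} = E[Y_T(sd(.))]: expectation over potential outcomes and
   the randomization (independent of the potential outcomes). *)
Definition Wstoch (R : realFieldType) (T : nat) (Omega : finType) (p : Omega -> R)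
  (Y : Omega -> forall i : 'I_T, i.+1.-tuple bool -> bool)
  (sd : stoch_regime R T) : R :=
  \sum_(d : regime T) rand_weight sd d * W p Y d.

From HB Require Import structures.
From mathcomp Require Import all_boot all_order all_algebra.
Import Order.TTheory GRing.Theory Num.Theory.
Set Implicit Arguments.
Unset Strict Implicit.
Unset Printing Implicit Defensive.
Local Open Scope ring_scope.

(* Randomizing every rule value independently turns a stochastic regime into a
   probability distribution over deterministic regimes, so W of a stochastic
   regime is a convex combination of the W d and cannot exceed their maximum.
   A deterministic regime, seen as a stochastic one, puts all its mass on
   itself, so it attains the maximum over stochastic regimes as well.  No
   property of p or of T is needed. *)

Section BernoulliWeights.
Variables (R : comNzRingType) (K : finType) (q : K -> R).

Definition bernoulli_weight (f : {ffun K -> bool}) : R :=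
  \prod_k (if f k then q k else 1 - q k).

Lemma sum_bernoulli_weight : \sum_f bernoulli_weight f = 1.
Proof.
rewrite -(bigA_distr_bigA (fun k (b : bool) => if b then q k else 1 - q k)).
by apply: big1 => k _; rewrite big_bool /= addrC subrK.
Qed.

End BernoulliWeights.

Lemma bernoulli_weight_ge0 (R : numDomainType) (K : finType) (q : K -> R) f :
  (forall k, 0 <= q k <= 1) -> 0 <= bernoulli_weight q f.
Proof.
move=> q01; apply: prodr_ge0 => k _; have /andP[q_ge0 q_le1] := q01 k.
by case: (f k); rewrite ?subr_ge0.
Qed.

Lemma bernoulli_weight_nat (R : comNzRingType) (K : finType) (q : K -> R)
    (g f : {ffun K -> bool}) :
  (forall k, q k = (g k)%:R) -> bernoulli_weight q f = (f == g)%:R.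
Proof.
move=> qE; have [-> | /eqP neq_fg] := eqVneq f g.
  by apply: big1 => k _; rewrite qE; case: (g k); rewrite ?subr0.
have [k neq_k] : exists k, f k != g k.
  apply/existsP; rewrite -negb_forall; apply/negP => /forallP eq_fg.
  by apply: neq_fg; apply/ffunP => k; apply/eqP.
rewrite /bernoulli_weight (bigD1 k) //=.
by rewrite qE; move: neq_k; case: (f k); case: (g k) => //= _; rewrite ?subrr mul0r.
Qed.

Section FlattenRegime.
Variable T : nat.

Definition rule_history (i : 'I_T) : Type := (i.-tuple bool * i.-tuple bool)%type.

(* A regime is a boolean per rule value, i.e. a function on [rule_index]. *)
Definition rule_index := {i : 'I_T & rule_history i}.

Definition flatten_regime (d : regime T) : {ffun rule_index -> bool} :=
  [ffun x => d (tag x) (tagged x)].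

Definition unflatten_regime (f : {ffun rule_index -> bool}) : regime T :=
  [ffun i => [ffun h => f (Tagged rule_history h)]].

Lemma flatten_regimeK : cancel flatten_regime unflatten_regime.
Proof. by move=> d; apply/ffunP => i; apply/ffunP => h; rewrite !ffunE. Qed.

Lemma unflatten_regimeK : cancel unflatten_regime flatten_regime.
Proof. by move=> f; apply/ffunP => -[i h]; rewrite !ffunE. Qed.

Definition flatten_stoch (R : realFieldType) (sd : stoch_regime R T) : rule_index -> R :=
  fun x => sd (tag x) (tagged x).

Lemma rand_weight_flatten (R : realFieldType) (sd : stoch_regime R T) d :
  rand_weight sd d = bernoulli_weight (flatten_stoch sd) (flatten_regime d).
Proof.
rewrite /rand_weight (@sig_big_dep _ _ _ _ rule_history xpredT (fun=> xpredT)
  (fun i h => if d i h then sd i h else 1 - sd i h)) /=.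
by apply: eq_bigr => x _; rewrite ffunE.
Qed.

End FlattenRegime.

Section RandWeight.
Variables (R : realFieldType) (T : nat).

Lemma rand_weight_ge0 (sd : stoch_regime R T) d : is_stoch sd -> 0 <= rand_weight sd d.
Proof. by move=> sd01; rewrite rand_weight_flatten; apply: bernoulli_weight_ge0 => -[]. Qed.

Lemma sum_rand_weight (sd : stoch_regime R T) : \sum_(d : regime T) rand_weight sd d = 1.
Proof.
rewrite (reindex (@unflatten_regime T)); last first.
  by exists (@flatten_regime T) => f _; [exact: unflatten_regimeK | exact: flatten_regimeK].
under eq_bigr => f _ do rewrite rand_weight_flatten unflatten_regimeK.
exact: sum_bernoulli_weight.
Qed.

Lemma rand_weight_embed (d0 d : regime T) : rand_weight (embed R d0) d = (d == d0)%:R.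
Proof.
rewrite rand_weight_flatten (bernoulli_weight_nat (g := flatten_regime d0)).
  by rewrite (inj_eq (can_inj (@flatten_regimeK T))).
by move=> x; rewrite ffunE.
Qed.

End RandWeight.

Lemma embed_is_stoch (R : realFieldType) (T : nat) (d : regime T) : is_stoch (embed R d).
Proof. by move=> i h; rewrite /embed; case: (d i h); rewrite /= ?lexx ?ler01. Qed.

Section StochasticWelfare.
Variables (R : realFieldType) (T : nat) (Omega : finType) (p : Omega -> R)
  (Y : Omega -> forall i : 'I_T, i.+1.-tuple bool -> bool).

Lemma Wstoch_embed (d : regime T) : Wstoch p Y (embed R d) = W p Y d.
Proof.
rewrite /Wstoch (bigD1 d) //= rand_weight_embed eqxx mul1r big1 ?addr0 // => d' /negPf neq_d'.
by rewrite rand_weight_embed neq_d' mul0r.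
Qed.

Lemma Wstoch_le_bound (sd : stoch_regime R T) (M : R) :
  is_stoch sd -> (forall d, W p Y d <= M) -> Wstoch p Y sd <= M.
Proof.
move=> sd01 W_le_M; rewrite -[M]mul1r -(sum_rand_weight sd) mulr_suml.
by apply: ler_sum => d _; apply: ler_wpM2l; [exact: rand_weight_ge0 | exact: W_le_M].
Qed.

End StochasticWelfare.

Theorem theorem3 (R : realFieldType) (T : nat) (hT : (0 < T)%N)
  (Omega : finType) (p : Omega -> R)
  (p_ge0 : forall w, 0 <= p w) (p_sum1 : \sum_(w : Omega) p w = 1)
  (Y : Omega -> forall i : 'I_T, i.+1.-tuple bool -> bool)
  (dstar : regime T) :
  (forall d : regime T, W p Y d <= W p Y dstar) ->
  is_stoch (embed R dstar) /\
  (forall sd : stoch_regime R T, is_stoch sd ->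
     Wstoch p Y sd <= Wstoch p Y (embed R dstar)) /\
  Wstoch p Y (embed R dstar) = W p Y dstar.
Proof.
move=> dstar_max; split; first exact: embed_is_stoch.
rewrite Wstoch_embed; split=> // sd sd01.
exact: Wstoch_le_bound.
Qed.
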